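(* Let $\mathbf D_0\in\mathbb R^{m\times p}$ be a dictionary with unit-norm columns and $k$ such that $\delta_k(\mathbf D_0)<1$. For $t<\sqrt{1-\delta_k(\mathbf D_0)}$ define $C_t\triangleq\frac{1}{\sqrt{1-\delta_k(\mathbf D_0)}-t}$. For any $\mathbf W\in\mathcal W_{\mathbf D_0}$, $\mathbf v\in\mathcal S^p$, $0\le t'\le t$ and $J$ with $|J|=k$, the matrix $\boldsymbol\Theta_J(t')\triangleq\big(\mathbf D_J^\top(t')\mathbf D_J(t')\big)^{-1}$ is well defined and $$|||\mathbf D_J(t')|||_2=|||\mathbf D_J^\top(t')|||_2\le C_t,\qquad |||\boldsymbol\Theta_J(t')|||_2\le C_t^2,\qquad |||\mathbf D_J(t')\boldsymbol\Theta_J(t')|||_2\le C_t,$$ where $\mathbf D_J(t')$ denotes the columns of $\mathbf D(\mathbf W,\mathbf v,t')$ indexed by $J$.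
   Context: $\delta_k(\mathbf D)$ (restricted isometry constant) is the smallest $\delta$ such that $(1-\delta)\|\mathbf z\|_2^2\le\|\mathbf D_J\mathbf z\|_2^2\le(1+\delta)\|\mathbf z\|_2^2$ for all $J$ with $|J|=k$ and $\mathbf z\in\mathbb R^k$. $\mathcal S^p$ unit sphere; $\mathcal W_{\mathbf D_0}=\{\mathbf W:\mathrm{diag}(\mathbf W^\top\mathbf D_0)=\mathbf 0,\mathrm{diag}(\mathbf W^\top\mathbf W)=\mathbf 1\}$; $\mathbf D(\mathbf W,\mathbf v,t)=\mathbf D_0\mathrm{Diag}[\cos(\mathbf vt)]+\mathbf W\mathrm{Diag}[\sin(\mathbf vt)]$. $|||\cdot|||_2$ spectral norm. *)

From HB Require Import structures.
From mathcomp Require Import all_boot all_order all_algebra.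
From mathcomp Require Import all_classical all_reals all_analysis.
Set Implicit Arguments. Unset Strict Implicit. Unset Printing Implicit Defensive.
Import Order.TTheory GRing.Theory Num.Theory.
Local Open Scope ring_scope.
Local Open Scope classical_set_scope.

Section Defs.
Variable R : realType.

Definition norm2 n (x : 'cV[R]_n) : R := Num.sqrt (\sum_i x i 0 ^+ 2).

Definition specnorm a b (A : 'M[R]_(a, b)) : R :=
  sup [set norm2 (A *m x) | x in [set x : 'cV[R]_b | norm2 x = 1]].

(* D_J : the columns of D indexed by J (in increasing order of enum) *)
Definition subcols m p (D : 'M[R]_(m, p)) (J : {set 'I_p}) : 'M[R]_(m, #|J|) :=
  colsub (fun i : 'I_#|J| => enum_val i) D.

Definition rip_bound m p (D : 'M[R]_(m, p)) (k : nat) (delta : R) : Prop :=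
  forall J : {set 'I_p}, #|J| = k -> forall z : 'cV[R]_#|J|,
    (1 - delta) * norm2 z ^+ 2 <= norm2 (subcols D J *m z) ^+ 2 /\
    norm2 (subcols D J *m z) ^+ 2 <= (1 + delta) * norm2 z ^+ 2.

Definition RIC m p (D : 'M[R]_(m, p)) (k : nat) : R :=
  inf [set delta | 0 <= delta /\ rip_bound D k delta].

Definition unit_columns m p (D : 'M[R]_(m, p)) : Prop :=
  forall j : 'I_p, norm2 (col j D) = 1.

Definition in_WD0 m p (D0 W : 'M[R]_(m, p)) : Prop :=
  (forall j : 'I_p, (W^T *m D0) j j = 0) /\ (forall j : 'I_p, (W^T *m W) j j = 1).

Definition Dpath m p (D0 W : 'M[R]_(m, p)) (v : 'cV[R]_p) (t : R) : 'M[R]_(m, p) :=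
  D0 *m diag_mx (\row_j cos (v j 0 * t)) + W *m diag_mx (\row_j sin (v j 0 * t)).

Definition Ct m p (D0 : 'M[R]_(m, p)) (k : nat) (t : R) : R :=
  (Num.sqrt (1 - RIC D0 k) - t)^-1.

End Defs.

From HB Require Import structures.
From mathcomp Require Import all_boot all_order all_algebra.
From mathcomp Require Import all_classical all_reals all_analysis.
From mathcomp Require Import ring lra.
Import Order.TTheory GRing.Theory Num.Theory.
Set Implicit Arguments. Unset Strict Implicit. Unset Printing Implicit Defensive.
Local Open Scope ring_scope.

(* Write [D_J(t')] as [D0_J + E]. Unit columns and the two conditions on [W]
   make column [j] of [E] have squared norm [2 - 2 cos (v_j t') <= v_j^2 t'^2],
   so [||E z|| <= t' ||z||]. With the RIP bounds for [D0_J] this gives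
   [(sqrt(1-delta) - t') ||z|| <= ||D_J(t') z|| <= (sqrt(1+delta) + t') ||z||],
   and as [t' <= t] the lower constant is at least [s = 1/C_t] while the upper
   one is at most [C_t]. The lower bound [s ||z||] alone yields everything
   about [Theta = (D_J^T D_J)^-1]: with [x = Theta y],
   [||D_J x||^2 = <x, y> <= ||x|| ||y||], whence [||x|| <= s^-2 ||y||] and
   [||D_J x|| <= s^-1 ||y||]. *)

Section Euclidean.
Variable R : realType.

Definition dot n (x y : 'cV[R]_n) : R := (x^T *m y) 0 0.

Lemma dotE n (x y : 'cV[R]_n) : dot x y = \sum_i x i 0 * y i 0.
Proof. by rewrite /dot mxE; apply: eq_bigr => i _; rewrite mxE. Qed.

Lemma dotC n (x y : 'cV[R]_n) : dot x y = dot y x.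
Proof. by rewrite !dotE; apply: eq_bigr => i _; rewrite mulrC. Qed.

Lemma dotDl n (x y z : 'cV[R]_n) : dot (x + y) z = dot x z + dot y z.
Proof. by rewrite !dotE -big_split; apply: eq_bigr => i _; rewrite mxE mulrDl. Qed.

Lemma dotZl n c (x y : 'cV[R]_n) : dot (c *: x) y = c * dot x y.
Proof. by rewrite !dotE mulr_sumr; apply: eq_bigr => i _; rewrite mxE mulrA. Qed.

Lemma dot_mulmxl m n (A : 'M[R]_(m, n)) x y : dot (A *m x) y = dot x (A^T *m y).
Proof. by rewrite /dot trmx_mul mulmxA. Qed.

Lemma dotxx n (x : 'cV[R]_n) : dot x x = \sum_i x i 0 ^+ 2.
Proof. by rewrite dotE; apply: eq_bigr => i _; rewrite expr2. Qed.

Lemma dotxx_ge0 n (x : 'cV[R]_n) : 0 <= dot x x.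
Proof. by rewrite dotxx; apply: sumr_ge0 => i _; rewrite sqr_ge0. Qed.

Lemma norm2_ge0 n (x : 'cV[R]_n) : 0 <= norm2 x.
Proof. exact: sqrtr_ge0. Qed.

Lemma norm2_sqr n (x : 'cV[R]_n) : norm2 x ^+ 2 = dot x x.
Proof. by rewrite /norm2 -dotxx sqr_sqrtr // dotxx_ge0. Qed.

Lemma le_of_sqr_le (u v : R) : 0 <= v -> u ^+ 2 <= v ^+ 2 -> u <= v.
Proof. by move=> v0 uv; nra. Qed.

Lemma sqrtr_mul_le (c x y : R) :
  0 <= x -> 0 <= y -> c * y ^+ 2 <= x ^+ 2 -> Num.sqrt c * y <= x.
Proof.
move=> x0 y0 cyx; have [c_lt0|c0] := ltP c 0; first by rewrite ltr0_sqrtr // mul0r.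
by apply: le_of_sqr_le => //; rewrite exprMn sqr_sqrtr.
Qed.

Lemma le_sqrtr_mul (c x y : R) :
  0 <= c -> 0 <= y -> x ^+ 2 <= c * y ^+ 2 -> x <= Num.sqrt c * y.
Proof.
move=> c0 y0 xcy; apply: le_of_sqr_le; first by rewrite mulr_ge0 ?sqrtr_ge0.
by rewrite exprMn sqr_sqrtr.
Qed.

Lemma cauchy_schwarz_sum n (a b : 'I_n -> R) :
  (\sum_i a i * b i) ^+ 2 <= (\sum_i a i ^+ 2) * (\sum_i b i ^+ 2).
Proof.
set A := \sum_i a i ^+ 2; set B := \sum_i b i ^+ 2; set C := \sum_i a i * b i.
have B_ge0 : 0 <= B by apply: sumr_ge0 => i _; rewrite sqr_ge0.
(* Lagrange's identity in the form [B (A B - C^2) = sum_i (B a_i - C b_i)^2]. *)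
have lagrange : 0 <= B * (A * B - C ^+ 2).
  have -> : B * (A * B - C ^+ 2) = \sum_i (B * a i - C * b i) ^+ 2.
    rewrite (eq_bigr (fun i => B ^+ 2 * a i ^+ 2 - (2 * B * C) * (a i * b i)
                               + C ^+ 2 * b i ^+ 2)); last by move=> i _; ring.
    by rewrite big_split /= sumrB -!mulr_sumr -/A -/B -/C; ring.
  by apply: sumr_ge0 => i _; rewrite sqr_ge0.
have [B_gt0|B_eq0] := ltrP 0 B; first by nra.
have {B_eq0} B0 : B = 0 by apply/eqP; rewrite eq_le B_eq0 B_ge0.
have b0 i : b i = 0.
  apply/eqP; rewrite -sqrf_eq0; apply/eqP.
  by apply: (psumr_eq0P _ B0) => // j _; rewrite sqr_ge0.
by rewrite /C big1 ?expr0n ?B0 ?mulr0 // => i _; rewrite b0 mulr0.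
Qed.

Lemma dot_le_norm2 n (x y : 'cV[R]_n) : dot x y <= norm2 x * norm2 y.
Proof.
apply: le_of_sqr_le; first by rewrite mulr_ge0 ?norm2_ge0.
by rewrite exprMn !norm2_sqr !dotxx dotE cauchy_schwarz_sum.
Qed.

Lemma norm2D_le n (x y : 'cV[R]_n) : norm2 (x + y) <= norm2 x + norm2 y.
Proof.
apply: le_of_sqr_le; first by rewrite addr_ge0 ?norm2_ge0.
rewrite norm2_sqr dotDl (dotC x) (dotC y) !dotDl (dotC y x) -!norm2_sqr.
by have := dot_le_norm2 x y; nra.
Qed.

Lemma norm2Z n c (x : 'cV[R]_n) : norm2 (c *: x) = `|c| * norm2 x.
Proof.
rewrite /norm2 -!dotxx dotZl dotC dotZl mulrA -expr2.
by rewrite sqrtrM ?sqr_ge0 // sqrtr_sqr.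
Qed.

Lemma norm2N n (x : 'cV[R]_n) : norm2 (- x) = norm2 x.
Proof. by rewrite -scaleN1r norm2Z normrN normr1 mul1r. Qed.

Lemma norm2_eq0 n (x : 'cV[R]_n) : norm2 x = 0 -> x = 0.
Proof.
move=> x0; have : \sum_i x i 0 ^+ 2 = 0 by rewrite -dotxx -norm2_sqr x0 expr0n.
move=> sum0; apply/matrixP => i j; rewrite ord1 mxE.
apply/eqP; rewrite -sqrf_eq0; apply/eqP.
by apply: (psumr_eq0P _ sum0) => // k _; rewrite sqr_ge0.
Qed.

Lemma norm2_0 n : norm2 (0 : 'cV[R]_n) = 0.
Proof. by rewrite /norm2 big1 ?sqrtr0 // => i _; rewrite mxE expr0n. Qed.

Definition frob m n (A : 'M[R]_(m, n)) : R := \sum_j \sum_i A i j ^+ 2.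

Lemma frob_ge0 m n (A : 'M[R]_(m, n)) : 0 <= frob A.
Proof. by apply: sumr_ge0 => j _; apply: sumr_ge0 => i _; rewrite sqr_ge0. Qed.

Lemma norm2_mulmx_frob m n (A : 'M[R]_(m, n)) x :
  norm2 (A *m x) ^+ 2 <= frob A * norm2 x ^+ 2.
Proof.
rewrite !norm2_sqr !dotxx /frob exchange_big /= mulr_suml.
by apply: ler_sum => i _; rewrite mxE cauchy_schwarz_sum.
Qed.

Lemma norm2_mulmx_frob_le m n (A : 'M[R]_(m, n)) e x :
  0 <= e -> frob A <= e ^+ 2 -> norm2 (A *m x) <= e * norm2 x.
Proof.
move=> e0 Ae; apply: le_of_sqr_le; first by rewrite mulr_ge0 ?norm2_ge0.
apply: le_trans (norm2_mulmx_frob A x) _.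
by rewrite exprMn ler_wpM2r ?sqr_ge0.
Qed.

End Euclidean.

Section SpectralNorm.
Variable R : realType.
Local Open Scope classical_set_scope.

Lemma specnorm_no_unit m n (A : 'M[R]_(m, n)) :
  ~ (exists x : 'cV[R]_n, norm2 x = 1) -> specnorm A = 0.
Proof.
move=> no_unit; rewrite /specnorm (_ : [set _ | _ in _] = set0) ?sup0 //.
by apply/seteqP; split => // _ [y /= y1 _]; apply: no_unit; exists y.
Qed.

Lemma norm2_mulmx_le_specnorm m n (A : 'M[R]_(m, n)) x :
  norm2 (A *m x) <= specnorm A * norm2 x.
Proof.
have [x0|x_neq0] := eqVneq (norm2 x) 0.
  by rewrite (norm2_eq0 x0) mulmx0 !norm2_0 mulr0.
have x_gt0 : 0 < norm2 x by rewrite lt_def x_neq0 norm2_ge0.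
set u := (norm2 x)^-1 *: x.
have u1 : norm2 u = 1 by rewrite norm2Z ger0_norm ?invr_ge0 ?norm2_ge0 // mulVf.
have has_sup_A : has_sup [set norm2 (A *m y) | y in [set y | norm2 y = 1]].
  split; first by exists (norm2 (A *m u)), u.
  exists (Num.sqrt (frob A)) => _ [y /= y1 <-].
  apply: le_of_sqr_le; first exact: sqrtr_ge0.
  rewrite [X in _ <= X]sqr_sqrtr ?frob_ge0 //.
  by have := norm2_mulmx_frob A y; rewrite y1 expr1n mulr1.
have : norm2 (A *m u) <= specnorm A by apply: (sup_upper_bound has_sup_A); exists u.
rewrite -scalemxAr norm2Z ger0_norm ?invr_ge0 ?norm2_ge0 // ler_pdivrMl //.
by rewrite mulrC.
Qed.

Lemma specnorm_ge0 m n (A : 'M[R]_(m, n)) : 0 <= specnorm A.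
Proof.
have [[x x1]|no_unit] := pselect (exists x : 'cV[R]_n, norm2 x = 1).
  by have := norm2_mulmx_le_specnorm A x; rewrite x1 mulr1; apply/le_trans/norm2_ge0.
by rewrite specnorm_no_unit.
Qed.

Lemma specnorm_le m n (A : 'M[R]_(m, n)) c : 0 <= c ->
  (forall x, norm2 x = 1 -> norm2 (A *m x) <= c) -> specnorm A <= c.
Proof.
move=> c0 Ac.
have [[x x1]|no_unit] := pselect (exists x : 'cV[R]_n, norm2 x = 1).
  apply: ge_sup; first by exists (norm2 (A *m x)), x.
  by move=> _ [y /= y1 <-]; apply: Ac.
by rewrite specnorm_no_unit.
Qed.

Lemma specnorm_le_tr m n (A : 'M[R]_(m, n)) : specnorm A <= specnorm A^T.
Proof.
apply: specnorm_le; first exact: specnorm_ge0.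
move=> x x1; set y := A *m x.
have y_sqr : norm2 y ^+ 2 <= specnorm A^T * norm2 y.
  rewrite norm2_sqr {1}/y dot_mulmxl; apply: le_trans (dot_le_norm2 _ _) _.
  by rewrite x1 mul1r norm2_mulmx_le_specnorm.
by have := norm2_ge0 y; have := specnorm_ge0 A^T; nra.
Qed.

Lemma specnorm_tr m n (A : 'M[R]_(m, n)) : specnorm A = specnorm A^T.
Proof. by apply/eqP; rewrite eq_le specnorm_le_tr -{2}(trmxK A) specnorm_le_tr. Qed.

End SpectralNorm.

Section GramInverse.
Variables (R : realType) (m n : nat) (A : 'M[R]_(m, n)) (s : R).
Hypothesis s_gt0 : 0 < s.
Hypothesis A_lower : forall z, s * norm2 z <= norm2 (A *m z).

Lemma norm2_mulmx_sqr z : norm2 (A *m z) ^+ 2 = dot z (A^T *m A *m z).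
Proof. by rewrite norm2_sqr dot_mulmxl mulmxA. Qed.

Lemma gram_unitmx : A^T *m A \in unitmx.
Proof.
rewrite unitmxE unitfE; apply/negP => /det0P [w w_neq0 wG].
have Gw : A^T *m A *m w^T = 0.
  by rewrite -[A^T *m A]trmxK trmx_mul trmxK -trmx_mul wG trmx0.
have Aw0 : norm2 (A *m w^T) = 0.
  apply/eqP; rewrite -sqrf_eq0 norm2_mulmx_sqr Gw dotE big1 // => i _.
  by rewrite !mxE mulr0.
have w0 : norm2 w^T = 0.
  apply/eqP; rewrite eq_le norm2_ge0 andbT -(pmulr_rle0 _ s_gt0) -Aw0.
  exact: A_lower.
by move: w_neq0; rewrite -[w]trmxK (norm2_eq0 w0) trmx0 eqxx.
Qed.

Let Theta := invmx (A^T *m A).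

Lemma norm2_mulmx_gram_inv y : norm2 y = 1 ->
  s * norm2 (Theta *m y) <= norm2 (A *m (Theta *m y)) /\
  norm2 (A *m (Theta *m y)) ^+ 2 <= norm2 (Theta *m y).
Proof.
move=> y1; split; first exact: A_lower.
rewrite norm2_mulmx_sqr mulmxA mulmxV ?gram_unitmx // mul1mx.
by apply: le_trans (dot_le_norm2 _ _) _; rewrite y1 mulr1.
Qed.

Lemma specnorm_gram_inv : specnorm Theta <= s^-1 ^+ 2.
Proof.
apply: specnorm_le; first by rewrite sqr_ge0.
move=> y y1; have [lower upper] := norm2_mulmx_gram_inv y1.
set x := norm2 (Theta *m y) in lower upper *.
have x0 : 0 <= x by apply: norm2_ge0.
have sx_sqr : (s * x) ^+ 2 <= x.
  apply: (le_trans _ upper); apply: lerXn2r => //.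
    by rewrite nnegrE mulr_ge0 // ltW.
  by rewrite nnegrE norm2_ge0.
have sx : s ^+ 2 * x <= 1.
  have [->|x_neq0] := eqVneq x 0; first by rewrite mulr0.
  have : 0 < x by rewrite lt_def x_neq0 x0.
  by nra.
by rewrite -ler_pdivlMl ?exprn_gt0 // -exprVn mulr1 in sx.
Qed.

Lemma specnorm_mulmx_gram_inv : specnorm (A *m Theta) <= s^-1.
Proof.
apply: specnorm_le; first by rewrite invr_ge0 ltW.
move=> y y1; rewrite -mulmxA; have [lower upper] := norm2_mulmx_gram_inv y1.
set Ax := norm2 (A *m _) in lower upper *.
have Ax0 : 0 <= Ax by apply: norm2_ge0.
have sAx : s * Ax <= 1.
  have [->|Ax_neq0] := eqVneq Ax 0; first by rewrite mulr0.
  have Ax_gt0 : 0 < Ax by rewrite lt_def Ax_neq0 Ax0.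
  have sAx_sqr : s * Ax ^+ 2 <= Ax.
    by apply: le_trans lower; rewrite ler_pM2l.
  by nra.
by rewrite -ler_pdivlMl // mulr1 in sAx.
Qed.

End GramInverse.

Section Trigonometry.
Variable R : realType.

Lemma ler_norm_sin_pos (y : R) : 0 <= y -> `|sin y| <= y.
Proof.
move=> y0; have [] := @MVT_segment R sin cos 0 y y0 (fun c _ => is_derive_sin c).
  by apply: derivable_within_continuous => z _; exact: ex_derive.
move=> c _; rewrite sin0 !subr0 => ->.
by rewrite normrM (ger0_norm y0) ler_piMl // cos_max.
Qed.

Lemma ler_norm_sin (y : R) : `|sin y| <= `|y|.
Proof.
have [y0|y_lt0] := leP 0 y; first by rewrite (ger0_norm y0) ler_norm_sin_pos.
by rewrite -normrN -sinN (ltr0_norm y_lt0) ler_norm_sin_pos // oppr_ge0 ltW.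
Qed.

(* [2 - 2 cos x = 4 sin^2 (x/2)]. *)
Lemma two_sub_cos_le_sqr (x : R) : 2 - 2 * cos x <= x ^+ 2.
Proof.
have -> : x = (x / 2) *+ 2 by rewrite -mulr_natr divfK // pnatr_eq0.
rewrite cos_mulr2n; set y := x / 2.
have sin_y : sin y ^+ 2 <= y ^+ 2.
  rewrite -(real_normK (num_real (sin y))) -(real_normK (num_real y)).
  by rewrite ler_sqr ?nnegrE // ler_norm_sin.
by have := cos2Dsin2 y; rewrite -mulr_natr; nra.
Qed.

End Trigonometry.

Section Dictionary.
Variables (R : realType) (m p : nat) (D0 : 'M[R]_(m, p)).
Hypothesis D0_unit : unit_columns D0.
Local Open Scope classical_set_scope.

Lemma unit_columns_sum_sqr j : \sum_i D0 i j ^+ 2 = 1.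
Proof.
rewrite -(expr1n R 2) -(D0_unit j) norm2_sqr dotxx.
by apply: eq_bigr => i _; rewrite mxE.
Qed.

Lemma frob_subcols (J : {set 'I_p}) : frob (subcols D0 J) = #|J|%:R.
Proof.
rewrite /frob (eq_bigr (fun _ => 1)) ?sumr_const ?card_ord // => j _.
by rewrite -(unit_columns_sum_sqr (enum_val j)); apply: eq_bigr => i _; rewrite mxE.
Qed.

(* Unit columns give [||D0_J z||^2 <= k ||z||^2], so [k + 1] is a crude RIP bound. *)
Lemma rip_bound_succ k : rip_bound D0 k k.+1%:R.
Proof.
move=> J J_card z; have := norm2_mulmx_frob (subcols D0 J) z.
rewrite frob_subcols (_ : #|J|%:R = k%:R :> R) ?J_card // => upper.
by have := sqr_ge0 (norm2 z); have := ler0n R k; rewrite -natr1; split; nra.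
Qed.

Lemma RIC_ge0 k : 0 <= RIC D0 k.
Proof.
apply: lb_le_inf => [|d []//]; exists k.+1%:R.
by split; [exact: ler0n | exact: rip_bound_succ].
Qed.

Lemma rip_bound_RIC k : rip_bound D0 k (RIC D0 k).
Proof.
have ripS : nonempty [set d | 0 <= d /\ rip_bound D0 k d].
  by exists k.+1%:R; split; [exact: ler0n | exact: rip_bound_succ].
move=> J J_card z; set a := norm2 z ^+ 2; set b := norm2 (subcols D0 J *m z) ^+ 2.
have a0 : 0 <= a by rewrite sqr_ge0.
have [a_eq0|a_neq0] := eqVneq a 0.
  have [_ upper] := rip_bound_succ J_card z.
  rewrite -/a -/b a_eq0 !mulr0 in upper *.
  by split; [rewrite sqr_ge0 | exact: upper].
have a_gt0 : 0 < a by rewrite lt_def a_neq0 a0.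
split.
- suff : 1 - b / a <= RIC D0 k by rewrite lerBlDr -lerBlDl ler_pdivlMr.
  apply: lb_le_inf => // d [_ /(_ J J_card z) [lower _]].
  by rewrite lerBlDr -lerBlDl ler_pdivlMr.
- suff : b / a - 1 <= RIC D0 k by rewrite lerBlDl ler_pdivrMr // mulrC.
  apply: lb_le_inf => // d [_ /(_ J J_card z) [_ upper]].
  by rewrite lerBlDl ler_pdivrMr // mulrC.
Qed.

Variables (W : 'M[R]_(m, p)) (v : 'cV[R]_p).
Hypotheses (W_in : in_WD0 D0 W) (v_unit : norm2 v = 1).

Lemma sum_sqr_Dpath_sub t j :
  \sum_i (Dpath D0 W v t i j - D0 i j) ^+ 2 = 2 - 2 * cos (v j 0 * t).
Proof.
have [WD0 WW] := W_in.
set c := cos (v j 0 * t); set s := sin (v j 0 * t).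
have D0_W : \sum_i D0 i j * W i j = 0.
  rewrite -[RHS](WD0 j) mxE; apply: eq_bigr => i _; by rewrite mxE mulrC.
have W_unit : \sum_i W i j ^+ 2 = 1.
  rewrite -[RHS](WW j) mxE; apply: eq_bigr => i _; by rewrite mxE expr2.
rewrite (eq_bigr (fun i => (c - 1) ^+ 2 * D0 i j ^+ 2
     + (2 * (c - 1) * s) * (D0 i j * W i j) + s ^+ 2 * W i j ^+ 2)); last first.
  by move=> i _; rewrite /Dpath !mul_mx_diag !mxE -/c -/s; ring.
rewrite !big_split /= -!mulr_sumr unit_columns_sum_sqr D0_W W_unit.
by have := cos2Dsin2 (v j 0 * t); rewrite -/c -/s; nra.
Qed.

Lemma frob_subcols_Dpath_sub t (J : {set 'I_p}) :
  frob (subcols (Dpath D0 W v t) J - subcols D0 J) <= t ^+ 2.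
Proof.
have -> : frob (subcols (Dpath D0 W v t) J - subcols D0 J)
    = \sum_(j < #|J|) (2 - 2 * cos (v (enum_val j) 0 * t)).
  apply: eq_bigr => j _; rewrite -sum_sqr_Dpath_sub.
  by apply: eq_bigr => i _; rewrite !mxE.
apply: (@le_trans _ _ (\sum_(j < #|J|) v (enum_val j) 0 ^+ 2 * t ^+ 2)).
  by apply: ler_sum => j _; rewrite -exprMn two_sub_cos_le_sqr.
rewrite -(big_enum_val (A := mem J) (fun l => v l 0 ^+ 2 * t ^+ 2)) -mulr_suml.
rewrite -[X in _ <= X]mul1r ler_wpM2r ?sqr_ge0 //.
rewrite -(expr1n R 2) -v_unit norm2_sqr dotxx big_mkcond /=.
by apply: ler_sum => l _; case: (l \in J); rewrite ?sqr_ge0.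
Qed.

Variables (k : nat) (J : {set 'I_p}).
Hypothesis J_card : #|J| = k.

Lemma subcols_Dpath_lower t z : 0 <= t ->
  (Num.sqrt (1 - RIC D0 k) - t) * norm2 z <= norm2 (subcols (Dpath D0 W v t) J *m z).
Proof.
move=> t0; set E := subcols (Dpath D0 W v t) J - subcols D0 J.
have Ez : norm2 (E *m z) <= t * norm2 z.
  exact: norm2_mulmx_frob_le t0 (frob_subcols_Dpath_sub t J).
have D0z : Num.sqrt (1 - RIC D0 k) * norm2 z <= norm2 (subcols D0 J *m z).
  by apply: sqrtr_mul_le; rewrite ?norm2_ge0 //; case: (rip_bound_RIC J_card z).
have : norm2 (subcols D0 J *m z)
       <= norm2 (subcols (Dpath D0 W v t) J *m z) + norm2 (E *m z).
  rewrite -(norm2N (E *m z)); apply: le_trans (norm2D_le _ _).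
  by rewrite /E mulmxBl opprB addrC subrK.
by lra.
Qed.

Lemma subcols_Dpath_upper t z : 0 <= t ->
  norm2 (subcols (Dpath D0 W v t) J *m z) <= (Num.sqrt (1 + RIC D0 k) + t) * norm2 z.
Proof.
move=> t0; set E := subcols (Dpath D0 W v t) J - subcols D0 J.
have Ez : norm2 (E *m z) <= t * norm2 z.
  exact: norm2_mulmx_frob_le t0 (frob_subcols_Dpath_sub t J).
have D0z : norm2 (subcols D0 J *m z) <= Num.sqrt (1 + RIC D0 k) * norm2 z.
  apply: le_sqrtr_mul; rewrite ?norm2_ge0 ?addr_ge0 ?RIC_ge0 //.
  by case: (rip_bound_RIC J_card z).
have -> : subcols (Dpath D0 W v t) J = subcols D0 J + E by rewrite addrC subrK.
by rewrite mulmxDl; apply: le_trans (norm2D_le _ _) _; lra.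
Qed.

End Dictionary.

Lemma sqrt1D_add_le_inv (R : realType) (d t t' : R) :
  0 <= d -> 0 <= t' -> t' <= t -> t < Num.sqrt (1 - d) ->
  Num.sqrt (1 + d) + t' <= (Num.sqrt (1 - d) - t)^-1.
Proof.
move=> d0 t'0 t't t_lt; set a := Num.sqrt (1 + d); set b := Num.sqrt (1 - d).
have t0 : 0 <= t := le_trans t'0 t't.
have b_gt0 : 0 < b := le_lt_trans t0 t_lt.
have d_lt1 : d < 1 by move: b_gt0; rewrite sqrtr_gt0 subr_gt0.
have aa : a ^+ 2 = 1 + d by rewrite sqr_sqrtr // addr_ge0.
have bb : b ^+ 2 = 1 - d by rewrite sqr_sqrtr // subr_ge0 ltW.
have a0 : 0 <= a := sqrtr_ge0 _.
have ab_le1 : a * b <= 1.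
  by apply: le_of_sqr_le => //; rewrite exprMn aa bb expr1n; nra.
have b_le_a : b <= a by apply: le_of_sqr_le => //; rewrite aa bb; lra.
rewrite -[_^-1]div1r ler_pdivlMr ?subr_gt0 //.
(* [(a + t')(b - t) = ab - t (a - b) - (t - t') b - t' t]. *)
have : 0 <= t * (a - b) by rewrite mulr_ge0 ?subr_ge0.
have : 0 <= (t - t') * b by rewrite mulr_ge0 ?subr_ge0 // ltW.
by have := mulr_ge0 t'0 t0; nra.
Qed.

Theorem lemma5 (R : realType) (m p k : nat) (D0 : 'M[R]_(m, p)) (t : R) :
  unit_columns D0 ->
  RIC D0 k < 1 ->
  t < Num.sqrt (1 - RIC D0 k) ->
  forall (W : 'M[R]_(m, p)) (v : 'cV[R]_p) (t' : R) (J : {set 'I_p}),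
    in_WD0 D0 W -> norm2 v = 1 -> 0 <= t' -> t' <= t -> #|J| = k ->
    let DJ := subcols (Dpath D0 W v t') J in
    let Theta := invmx (DJ^T *m DJ) in
    (DJ^T *m DJ) \in unitmx /\
    specnorm DJ = specnorm DJ^T /\
    specnorm DJ <= Ct D0 k t /\
    specnorm Theta <= Ct D0 k t ^+ 2 /\
    specnorm (DJ *m Theta) <= Ct D0 k t.
Proof.
(* [RIC D0 k < 1] is implied by [0 <= t < sqrt (1 - RIC D0 k)]. *)
move=> D0_unit _ t_lt W v t' J W_in v_unit t'0 t't J_card DJ Theta.
set s := Num.sqrt (1 - RIC D0 k) - t.
have s_gt0 : 0 < s by rewrite subr_gt0.
have DJ_lower z : s * norm2 z <= norm2 (DJ *m z).
  apply: le_trans (subcols_Dpath_lower D0_unit W_in v_unit J_card z t'0).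
  by rewrite ler_wpM2r ?norm2_ge0 // lerD2l lerN2.
have -> : Ct D0 k t = s^-1 by [].
split; first exact: gram_unitmx s_gt0 DJ_lower.
split; first exact: specnorm_tr.
split.
  apply: specnorm_le => [|x x1]; first by rewrite invr_ge0 ltW.
  apply: le_trans (subcols_Dpath_upper D0_unit W_in v_unit J_card x t'0) _.
  by rewrite x1 mulr1 sqrt1D_add_le_inv ?RIC_ge0.
split; first exact: specnorm_gram_inv s_gt0 DJ_lower.
exact: specnorm_mulmx_gram_inv s_gt0 DJ_lower.
Qed.
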